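(* Assume $n > 3t+2d$. Then Algorithm 1 implements the MBRB abstraction, i.e. it satisfies MBRB-Validity, MBRB-No-duplication, MBRB-No-duplicity, MBRB-Local-delivery and MBRB-Global-delivery, with $\ell = c-d$. Moreover, if a correct process mbrb-broadcasts an app-message $m$ with sequence number $sn$, then at least $c-d$ correct processes mbrb-deliver $(m,sn)$ from it within 2 communication steps if $d < \frac{c-\lfloor (n+t)/2\rfloor}{\lfloor (n+t)/2\rfloor+1}$, and within 3 communication steps if $d < c-\sqrt{c\cdot\frac{n+t}{2}}$. Finally, the mbrb-broadcast of an app-message by a correct process entails the sending of at most $2n^2$ implementation messages by correct processes.
   Context: System model. There are $n$ asynchronous sequential processes $p_1,\dots,p_n$ with distinct identities $1,\dots,n$ known to all. Up to $t$ processes are Byzantine (they may behave arbitrarily and collude; a crash counts as a Byzantine failure); the others are correct. In a given execution, $c$ denotes the number of correct processes, so $n-t\le c\le n$. Processes communicate over a fully connected asynchronous point-to-point network that never corrupts, duplicates or creates messages. The operation ''broadcast $M$'' by a process means sending the implementation message (imp-message) $M$ to each of the $n$ processes (including itself); correct processes send only via this operation. A message adversary with parameter $d$, $0\le d<c$, may, for each broadcast by a correct process, suppress up to $d$ of the copies addressed to correct processes; all other copies sent between correct processes are eventually received. Digital signatures are unforgeable: each process has a key pair, all public keys and their owners are known, and only $p_k$ can produce a valid signature by $p_k$; a process produces at most one signature per signed item. MBRB abstraction. An application message (app-message) $m$ is mbrb-broadcast by $p_i$ with a sequence number $sn$ (invocation $\mathrm{mbrb\_broadcast}(m,sn)$);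 a correct process never uses the same sequence number twice. A process mbrb-delivers a triplet $(m,sn,j)$ meaning app-message $m$ from $p_j$ with sequence number $sn$. Properties: MBRB-Validity: if a correct process mbrb-delivers $m$ from a correct $p_j$ with sequence number $sn$, then $p_j$ mbrb-broadcast $m$ with sequence number $sn$. MBRB-No-duplication: a correct process mbrb-delivers at most one app-message from $p_j$ with sequence number $sn$. MBRB-No-duplicity: no two correct processes mbrb-deliver different app-messages from the same $p_i$ with the same $sn$. MBRB-Local-delivery: if a correct $p_i$ mbrb-broadcasts $m$ with $sn$, at least one correct process eventually mbrb-delivers $m$ from $p_i$ with $sn$. MBRB-Global-delivery (with parameter $\ell$): if a correct process mbrb-delivers $m$ from $p_j$ with $sn$, then at least $\ell$ correct processes mbrb-deliver $m$ from $p_j$ with $sn$. Algorithm 1 (code for $p_i$). Each process stores, for each triplet $(m,sn,j)$, a set of saved valid signatures of that triplet, at most one per signer. On $\mathrm{mbrb\_broadcast}(m,sn)$: $p_i$ saves its own signature of $(m,sn,i)$ and broadcasts $\mathrm{BUNDLE}(m,sn,i,S)$ where $S$ is the set of all saved signatures for $(m,sn,i)$. On receiving $\mathrm{BUNDLE}(m,sn,j,sigs)$: if $p_i$ has not already mbrb-delivered some triplet $(-,sn,j)$ and $sigs$ contains a valid signature of $(m,sn,j)$ by $p_j$, then: (1) $p_i$ saves all not-yet-saved valid signatures of $(m,sn,j)$ contained in $sigs$; (2) if $p_i$ has not yet signed any triplet $(-,sn,j)$, it saves its own signature of $(m,sn,j)$ and broadcasts $\mathrm{BUNDLE}(m,sn,j,\text{all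 saved signatures for }(m,sn,j))$; (3) if strictly more than $\frac{n+t}{2}$ signatures for $(m,sn,j)$ are saved, it broadcasts $\mathrm{BUNDLE}(m,sn,j,\text{all saved signatures for }(m,sn,j))$ and then mbrb-delivers $(m,sn,j)$. Time is measured in communication steps: local computation takes zero time and all imp-messages have the same transfer delay (one step). *)

(* Model of Algorithm 1 (signature-based MBRB) as a
   trace semantics: an execution is an infinite sequence of events. *)
From HB Require Import structures.
From mathcomp Require Import all_boot all_order all_algebra.
Set Implicit Arguments. Unset Strict Implicit. Unset Printing Implicit Defensive.
Import Order.TTheory GRing.Theory Num.Theory.

Section Model.
Variables (M : eqType) (n t : nat).

(* processes are 'I_n; a triplet (m, sn, j) = app-message m from p_j with
   sequence number sn. *)
Definition triplet := (M * nat * 'I_n)%type.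
Definition tr_sn (x : triplet) : nat := x.1.2.
Definition tr_src (x : triplet) : 'I_n := x.2.

(* an (abstract, unforgeable) signature: (signer, signed triplet) *)
Definition signature := ('I_n * triplet)%type.

Inductive imsg := Bundle of M & nat & 'I_n & seq signature.
Definition bundle_tag (b : imsg) : nat * 'I_n :=
  let: Bundle _ sn j _ := b in (sn, j).
Definition bundle_sigs (b : imsg) : seq signature :=
  let: Bundle _ _ _ s := b in s.

Record lstate := LState {
  saved : seq signature;
  mysigs : seq triplet;
  delivered : seq triplet }.
Definition init_lstate := LState [::] [::] [::].

Definition sigs_for (st : lstate) (x : triplet) : seq signature :=
  [seq s <- saved st | s.2 == x].
Definition nsaved (st : lstate) (x : triplet) : nat :=
  #|[set k : 'I_n | (k, x) \in saved st]|.

Definition add_sig (st : lstate) (s : signature) : lstate :=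
  if s \in saved st then st
  else LState (rcons (saved st) s) (mysigs st) (delivered st).
Definition add_mysig (st : lstate) (x : triplet) : lstate :=
  LState (saved st) (rcons (mysigs st) x) (delivered st).
Definition add_delivered (st : lstate) (x : triplet) : lstate :=
  LState (saved st) (mysigs st) (rcons (delivered st) x).

Definition has_key (sn : nat) (j : 'I_n) (l : seq triplet) : bool :=
  has (fun y : triplet => (tr_sn y == sn) && (tr_src y == j)) l.

(* result of a local step: new state, imp-messages broadcast (in order),
   optional mbrb-delivered triplet *)
Definition step_res := (lstate * seq imsg * option triplet)%type.

Definition on_invoke (i : 'I_n) (st : lstate) (m : M) (sn : nat) : step_res :=
  let x : triplet := (m, sn, i) in
  let st1 := add_sig (add_mysig st x) (i, x) in
  (st1, [:: Bundle m sn i (sigs_for st1 x)], None).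

Definition on_bundle (i : 'I_n) (st : lstate) (m : M) (sn : nat) (j : 'I_n)
    (sigs : seq signature) : step_res :=
  let x : triplet := (m, sn, j) in
  if ~~ has_key sn j (delivered st) && ((j, x) \in sigs) then
    let st1 := foldl add_sig st [seq s <- sigs | s.2 == x] in
    let st2 := if has_key sn j (mysigs st1) then st1
               else add_sig (add_mysig st1 x) (i, x) in
    let out2 := if has_key sn j (mysigs st1) then [::]
                else [:: Bundle m sn j (sigs_for st2 x)] in
    if n + t < 2 * nsaved st2 x then
      (add_delivered st2 x, out2 ++ [:: Bundle m sn j (sigs_for st2 x)], Some x)
    else (st2, out2, None)
  else (st, [::], None).

Inductive event :=
| Invoke of 'I_n & M & nat
    (* Invoke i m sn : correct p_i invokes mbrb_broadcast(m, sn) *)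
| Recv of 'I_n & 'I_n & imsg & nat & nat
    (* Recv i src b s k : p_i receives from src the copy addressed to p_i
       of the k-th imp-message sent by src at step s, whose content is b *)
| ByzSend of 'I_n & 'I_n & imsg
    (* ByzSend b dst msg : Byzantine p_b sends msg to p_dst *)
| Skip.

Definition handle (i : 'I_n) (st : lstate) (e : event) : step_res :=
  match e with
  | Invoke i' m sn => if i' == i then on_invoke i st m sn else (st, [::], None)
  | Recv i' _ (Bundle m sn j sigs) _ _ =>
      if i' == i then on_bundle i st m sn j sigs else (st, [::], None)
  | _ => (st, [::], None)
  end.

Variable tr : nat -> event.

(* local state of p_i before step s *)
Fixpoint lst (i : 'I_n) (s : nat) : lstate :=
  if s is s'.+1 then (handle i (lst i s') (tr s')).1.1 else init_lstate.
Definition outs (i : 'I_n) (s : nat) : seq imsg := (handle i (lst i s) (tr s)).1.2.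
Definition dlv (i : 'I_n) (s : nat) : option triplet := (handle i (lst i s) (tr s)).2.

Variables (d : nat) (C : {set 'I_n}).  (* C = set of correct processes *)

(* admissible executions of Algorithm 1 with correct set C, against
   Byzantine processes (~: C) and a message adversary of power d *)
Definition admissible : Prop :=
  (forall s i m sn, tr s = Invoke i m sn -> i \in C) /\
  (forall s1 s2 i m1 m2 sn, tr s1 = Invoke i m1 sn -> tr s2 = Invoke i m2 sn ->
     s1 = s2) /\
  (* network: no creation, no corruption; receptions modelled at correct
     processes only (Byzantine ones behave arbitrarily anyway) *)
  (forall s i src b s' k, tr s = Recv i src b s' k ->
     [/\ i \in C, s' < s &
       (src \in C /\ onth (outs src s') k = Some b) \/
       [/\ src \notin C, k = 0 & tr s' = ByzSend src i b]]) /\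
  (forall s1 s2 i src1 src2 b1 b2 s' k,
     tr s1 = Recv i src1 b1 s' k -> tr s2 = Recv i src2 b2 s' k -> s1 = s2) /\
  (* Byzantine senders; unforgeability of signatures of correct processes *)
  (forall s bz dst b, tr s = ByzSend bz dst b ->
     bz \notin C /\
     forall k x, (k, x) \in bundle_sigs b -> k \in C -> x \in mysigs (lst k s)) /\
  (* message adversary: for each broadcast by a correct process, at most d
     copies are suppressed; every other copy to a correct process is
     eventually received *)
  (forall src s k b, src \in C -> onth (outs src s) k = Some b ->
     exists D : {set 'I_n}, #|D| <= d /\
       forall dst, dst \in C -> dst \notin D ->
         exists s2, tr s2 = Recv dst src b s k).

(* timed execution: each event occurs at time tau s (nondecreasing along the
   trace, local computation takes zero time), and every imp-message has
   transfer delay exactly one communication step *)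
Definition unit_delay (R : numDomainType) (tau : nat -> R) : Prop :=
  (forall s1 s2, (s1 <= s2)%N -> (tau s1 <= tau s2)%R) /\
  (forall s i src b s' k, tr s = Recv i src b s' k -> tau s = (tau s' + 1)%R).

Definition mbrb_validity : Prop :=
  forall p s m sn j, p \in C -> j \in C -> dlv p s = Some (m, sn, j) ->
    exists s0, tr s0 = Invoke j m sn.

Definition mbrb_no_duplication : Prop :=
  forall p s1 s2 m1 m2 sn j, p \in C ->
    dlv p s1 = Some (m1, sn, j) -> dlv p s2 = Some (m2, sn, j) -> s1 = s2.

Definition mbrb_no_duplicity : Prop :=
  forall p q s1 s2 m1 m2 sn j, p \in C -> q \in C ->
    dlv p s1 = Some (m1, sn, j) -> dlv q s2 = Some (m2, sn, j) -> m1 = m2.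

Definition mbrb_local_delivery : Prop :=
  forall i s0 m sn, i \in C -> tr s0 = Invoke i m sn ->
    exists p s, p \in C /\ dlv p s = Some (m, sn, i).

Definition mbrb_global_delivery (l : nat) : Prop :=
  forall p s m sn j, p \in C -> dlv p s = Some (m, sn, j) ->
    exists S : {set 'I_n}, [/\ S \subset C, l <= #|S| &
      forall q, q \in S -> exists s', dlv q s' = Some (m, sn, j)].

Definition delivered_within (R : numDomainType) (tau : nat -> R) (l : nat)
    (i : 'I_n) (m : M) (sn s0 : nat) (delta : R) : Prop :=
  exists S : {set 'I_n}, [/\ S \subset C, l <= #|S| &
    forall q, q \in S -> exists s', dlv q s' = Some (m, sn, i) /\
                              (tau s' <= tau s0 + delta)%R].

(* number of imp-messages (copies, n per broadcast) with tag (sn, i) sent by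
   correct processes during the first N steps *)
Definition msgs_sent (sn : nat) (i : 'I_n) (N : nat) : nat :=
  \sum_(p in C) \sum_(s < N) n * count (fun b => bundle_tag b == (sn, i)) (outs p s).

End Model.

From HB Require Import structures.
From mathcomp Require Import all_boot all_order all_algebra zify lra.
From Stdlib Require Import Classical.
Import Order.TTheory GRing.Theory Num.Theory.
Set Implicit Arguments. Unset Strict Implicit. Unset Printing Implicit Defensive.

(* Signatures of correct processes cannot be forged, and a correct process
   signs at most one triplet per (sn, j); so a signature of a correct p_k
   found anywhere is the one p_k produced, and when p_j is correct every
   signed triplet from p_j is the one it broadcast.  Two sets of more than
   (n+t)/2 signers share a correct process, whence No-duplicity.  A process
   that delivers rebroadcasts its quorum of signatures, so every correct
   process that the adversary does not cut off delivers as well: this gives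
   Global-delivery with l = c - d.  For Local-delivery, each correct signer
   reaches at least c - d correct processes, which then sign in turn; as
   n > 3t + 2d means c - d > (n+t)/2, double counting the receptions yields a
   correct process holding more than (n+t)/2 signatures.  The same counting,
   restricted to the first two communication steps, gives the time bounds.
   Finally a correct process sends at most two bundles per (sn, i): one when
   it signs and one when it delivers. *)

Section Counting.
Variable T : finType.

Lemma leq_cardsD (A B : {set T}) : #|A| - #|B| <= #|A :\: B|.
Proof. by rewrite cardsD leq_sub2l // subset_leq_card // subsetIr. Qed.

Lemma finset_of_prop (P : T -> Prop) : exists S : {set T}, forall x, x \in S <-> P x.
Proof.
have /fin_all_exists [b Hb] : forall x, exists b : bool, b <-> P x.
  by move=> x; case: (classic (P x)) => HP; [exists true | exists false].
by exists [set x | b x] => x; rewrite inE.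
Qed.

Lemma double_count_pigeonhole (Q W : {set T}) (f : T -> {set T}) a k :
  (forall p, p \in Q -> f p \subset W /\ a <= #|f p|) ->
  #|W| * k < #|Q| * a ->
  exists2 r, r \in W & k < #|[set p in Q | r \in f p]|.
Proof.
move=> Hf Hlt; apply/exists_inP; apply: contraT.
rewrite negb_exists_in => /forall_inP Hsmall.
have card_sum r : #|[set p in Q | r \in f p]| = \sum_(p in Q) (r \in f p).
  rewrite -sum1_card big_mkcond [RHS]big_mkcond; apply: eq_bigr => p _.
  by rewrite inE; case: (p \in Q); case: (r \in f p).
have : \sum_(r in W) #|[set p in Q | r \in f p]| <= #|W| * k.
  by rewrite -sum_nat_const leq_sum // => r /Hsmall; rewrite -leqNgt.
have : #|Q| * a <= \sum_(r in W) #|[set p in Q | r \in f p]|.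
  under eq_bigr => r _ do rewrite card_sum.
  rewrite exchange_big -sum_nat_const leq_sum // => p /Hf [HfW Ha].
  apply: leq_trans Ha _; rewrite -sum1_card big_mkcond [X in _ <= X]big_mkcond.
  by apply: leq_sum => r _; case Hr: (r \in f p); rewrite ?(subsetP HfW r Hr).
lia.
Qed.

Lemma quorums_meet (C S1 S2 : {set T}) t :
  #|T| - t <= #|C| -> #|T| + t < 2 * #|S1| -> #|T| + t < 2 * #|S2| ->
  exists2 k, k \in C & (k \in S1) && (k \in S2).
Proof.
move=> HC H1 H2; apply/exists_inP; apply: contraT.
rewrite negb_exists_in => /forall_inP Hdisj.
have : S1 :&: S2 \subset ~: C.
  apply/subsetP => k; rewrite !inE => /andP[k1 k2].
  by apply: contraT => /negPn /Hdisj; rewrite k1 k2.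
move/subset_leq_card; have := cardsC C.
have := cardsUI S1 S2; have := max_card (S1 :|: S2); lia.
Qed.

End Counting.

Section RealBounds.
Local Open Scope ring_scope.

Lemma two_step_bound_eq0 (R : realFieldType) (c q d : nat) : (c <= q + q + 1)%N ->
  (d%:R : R) < (c%:R - q%:R) / (q%:R + 1) -> d = 0%N.
Proof.
move=> Hc Hlt.
have le1 : (c%:R - q%:R) / (q%:R + 1) <= (1 : R).
  rewrite ler_pdivrMr ?ltr_wpDl //; move: Hc; rewrite -(ler_nat R) !natrD /=; lra.
have : (d%:R : R) < 1%:R by apply: lt_le_trans Hlt le1.
by rewrite ltr_nat ltnS leqn0 => /eqP.
Qed.

Lemma three_step_bound_nat (R : rcfType) (c a d : nat) : (d <= c)%N ->
  (d%:R : R) < c%:R - Num.sqrt (c%:R * (a%:R / 2)) ->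
  (c * (a %/ 2) < (c - d) * (c - d))%N.
Proof.
move=> Hdc Hlt.
set b : R := c%:R * (a%:R / 2).
have Hb : 0 <= b by rewrite mulr_ge0 // divr_ge0.
have Hsq : Num.sqrt b * Num.sqrt b = b by rewrite -expr2 sqr_sqrtr.
have Hs0 : 0 <= Num.sqrt b by apply: sqrtr_ge0.
have Hcb : (c * (a %/ 2))%:R <= b.
  by rewrite natrM /b ler_wpM2l // ler_pdivlMr // -natrM ler_nat; lia.
rewrite -(ltr_nat R); apply: (le_lt_trans Hcb).
rewrite natrM natrB //; nra.
Qed.

End RealBounds.

Lemma subset_chain (T : eqType) (f : nat -> seq T) :
  (forall s, {subset f s <= f s.+1}) -> forall s s', s <= s' -> {subset f s <= f s'}.
Proof.
move=> Hf s s' /subnK <-; elim: (s' - s) => [|k IH] //= y Hy.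
by rewrite addSn; apply/Hf/IH.
Qed.

Section LocalStep.
Variables (M : eqType) (n t : nat).
Implicit Types (st : lstate M n) (x : triplet M n) (sg : signature M n)
  (l : seq (triplet M n)).

Lemma saved_add_sig st sg y :
  (y \in saved (add_sig st sg)) = (y == sg) || (y \in saved st).
Proof.
rewrite /add_sig; case: ifP => /= H; last by rewrite mem_rcons in_cons.
by case: eqP => // ->.
Qed.

Lemma mysigs_add_sig st sg : mysigs (add_sig st sg) = mysigs st.
Proof. by rewrite /add_sig; case: ifP. Qed.

Lemma delivered_add_sig st sg : delivered (add_sig st sg) = delivered st.
Proof. by rewrite /add_sig; case: ifP. Qed.

Lemma saved_foldl_add_sig st sgs y :
  (y \in saved (foldl (@add_sig M n) st sgs)) = (y \in sgs) || (y \in saved st).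
Proof.
elim: sgs st => [|sg sgs IH] st //=.
by rewrite IH saved_add_sig in_cons; case: (y == sg); rewrite ?orbT.
Qed.

Lemma mysigs_foldl_add_sig st sgs : mysigs (foldl (@add_sig M n) st sgs) = mysigs st.
Proof. by elim: sgs st => [|sg sgs IH] st //=; rewrite IH mysigs_add_sig. Qed.

Lemma delivered_foldl_add_sig st sgs :
  delivered (foldl (@add_sig M n) st sgs) = delivered st.
Proof. by elim: sgs st => [|sg sgs IH] st //=; rewrite IH delivered_add_sig. Qed.

Lemma mem_sigs_for st x sg : (sg \in sigs_for st x) = (sg \in saved st) && (sg.2 == x).
Proof. by rewrite /sigs_for mem_filter andbC. Qed.

Lemma has_key_rcons sn j l y :
  has_key sn j (rcons l y) = has_key sn j l || (tr_sn y == sn) && (tr_src y == j).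
Proof. by rewrite /has_key has_rcons orbC. Qed.

Lemma has_key_subset sn j l1 l2 : {subset l1 <= l2} -> has_key sn j l1 -> has_key sn j l2.
Proof. by move=> S /hasP[y /S Hy Hk]; apply/hasP; exists y. Qed.

Lemma has_key_witness sn j l : has_key sn j l -> exists m, (m, sn, j) \in l.
Proof.
case/hasP => [[[m sn'] j'] Hy /andP[/eqP /= <- /eqP /= <-]].
by exists m.
Qed.

Lemma mem_has_key m sn j l : (m, sn, j) \in l -> has_key sn j l.
Proof. by move=> H; apply/hasP; exists (m, sn, j); rewrite //= /tr_sn /tr_src !eqxx. Qed.

Definition accepts st (m : M) sn (j : 'I_n) (sigs : seq (signature M n)) :=
  ~~ has_key sn j (delivered st) && ((j, (m, sn, j)) \in sigs).

Lemma on_bundle_reject i st m sn j sigs : ~~ accepts st m sn j sigs ->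
  on_bundle t i st m sn j sigs = (st, [::], None).
Proof. by rewrite /on_bundle /accepts => /negbTE ->. Qed.

Lemma on_bundle_accept i st m sn j sigs : accepts st m sn j sigs ->
  on_bundle t i st m sn j sigs =
   let x := (m, sn, j) in
   let st1 := foldl (@add_sig M n) st [seq s <- sigs | s.2 == x] in
   let st2 := if has_key sn j (mysigs st) then st1
              else add_sig (add_mysig st1 x) (i, x) in
   let out2 := if has_key sn j (mysigs st) then [::]
               else [:: Bundle m sn j (sigs_for st2 x)] in
   if n + t < 2 * nsaved st2 x then
     (add_delivered st2 x, out2 ++ [:: Bundle m sn j (sigs_for st2 x)], Some x)
   else (st2, out2, None).
Proof. by rewrite /on_bundle /accepts => ->; rewrite mysigs_foldl_add_sig. Qed.

Section OnBundle.
Variables (i : 'I_n) (st : lstate M n) (m : M) (sn : nat) (j : 'I_n)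
  (sigs : seq (signature M n)).
Let x : triplet M n := (m, sn, j).
Let res := on_bundle t i st m sn j sigs.

Lemma on_bundle_saved y : y \in saved res.1.1 ->
  [\/ y \in saved st, y \in sigs | y = (i, x) /\ x \in mysigs res.1.1].
Proof.
rewrite /res; case: (boolP (accepts st m sn j sigs)) => H; last first.
  by rewrite on_bundle_reject //= => ?; constructor 1.
rewrite (on_bundle_accept _ H) /=.
case: ifP => Hm; case: ifP => Ht /=;
  rewrite ?saved_add_sig /= ?saved_foldl_add_sig ?mem_filter ?mysigs_foldl_add_sig;
  try (case/orP => [/andP[_ ?]|?]; [constructor 2|constructor 1]; done).
all: case/orP => [/eqP->|]; first by constructor 3; rewrite ?mysigs_add_sig /=
  ?mysigs_foldl_add_sig mem_rcons mem_head.
all: by case/orP => [/andP[_ ?]|?]; [constructor 2|constructor 1].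
Qed.

Lemma on_bundle_saved_mono : {subset saved st <= saved res.1.1}.
Proof.
move=> y Hy; rewrite /res; case: (boolP (accepts st m sn j sigs)) => H.
  rewrite (on_bundle_accept _ H) /=.
  by case: ifP => Hm; case: ifP => Ht /=;
    rewrite ?saved_add_sig /= ?saved_foldl_add_sig Hy ?orbT.
by rewrite on_bundle_reject.
Qed.

Lemma on_bundle_mysigs : mysigs res.1.1 = mysigs st \/
  [/\ mysigs res.1.1 = rcons (mysigs st) x, accepts st m sn j sigs &
      ~~ has_key sn j (mysigs st)].
Proof.
rewrite /res; case: (boolP (accepts st m sn j sigs)) => H; last first.
  by rewrite on_bundle_reject //=; left.
rewrite (on_bundle_accept _ H) /=.
case: ifP => Hm; case: ifP => Ht /=; rewrite ?mysigs_add_sig /= ?mysigs_foldl_add_sig;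
  by [left | right; split => //; rewrite Hm].
Qed.

Lemma on_bundle_delivered :
  delivered res.1.1 = if res.2 is Some y then rcons (delivered st) y else delivered st.
Proof.
rewrite /res; case: (boolP (accepts st m sn j sigs)) => H; last by rewrite on_bundle_reject.
rewrite (on_bundle_accept _ H) /=.
by case: ifP => Hm; case: ifP => Ht /=; rewrite ?delivered_add_sig /= ?delivered_foldl_add_sig.
Qed.

Lemma on_bundle_dlv y : res.2 = Some y ->
  [/\ y = x, accepts st m sn j sigs, n + t < 2 * nsaved res.1.1 x,
     (j, x) \in saved res.1.1 &
     exists k, onth res.1.2 k = Some (Bundle m sn j (sigs_for res.1.1 x))].
Proof.
rewrite /res; case: (boolP (accepts st m sn j sigs)) => H; last by rewrite on_bundle_reject.
rewrite (on_bundle_accept _ H) /=.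
case: ifP => Hq; case: ifP => Hk //= [<-]; rewrite Hk in Hq; split => //.
all: try exact Hq.
all: try by [exists 0 | exists 1].
all: by rewrite ?saved_add_sig /= saved_foldl_add_sig mem_filter eqxx (andP H).2 ?orbT.
Qed.

Lemma on_bundle_outs k b : onth res.1.2 k = Some b ->
  bundle_tag b = (sn, j) /\ {subset bundle_sigs b <= saved res.1.1}.
Proof.
rewrite /res; case: (boolP (accepts st m sn j sigs)) => H; last first.
  by rewrite on_bundle_reject //; case: k.
rewrite (on_bundle_accept _ H) /=.
case: ifP => Hm; case: ifP => Ht //=; case: k => [|[|k]] //=; rewrite ?onth0n // => -[<-];
  by split => // z; rewrite mem_sigs_for => /andP[].
Qed.

Lemma on_bundle_accepted : accepts st m sn j sigs ->
  [/\ {subset [seq s <- sigs | s.2 == x] <= saved res.1.1},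
     has_key sn j (mysigs res.1.1),
     n + t < 2 * #|[set k | ((k, x) \in saved st) || ((k, x) \in sigs)]| ->
        res.2 = Some x &
     ~~ has_key sn j (mysigs st) -> exists sgs : seq (signature M n),
        [/\ onth res.1.2 0 = Some (Bundle m sn j sgs), (i, x) \in sgs &
            (j, x) \in sgs]].
Proof.
move=> H; rewrite /res (on_bundle_accept _ H) /=.
have Hjx : (j, x) \in [seq s <- sigs | s.2 == x].
  by rewrite mem_filter eqxx; case/andP: H.
set st1 := foldl _ _ _.
set st2 := (if has_key sn j (mysigs st) then st1 else _).
have sigs_saved : {subset [seq s <- sigs | s.2 == x] <= saved st2}.
  by move=> z Hz; rewrite /st2; case: ifP => _;
    rewrite ?saved_add_sig /= saved_foldl_add_sig Hz ?orbT.
have old_saved : {subset saved st <= saved st2}.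
  by move=> z Hz; rewrite /st2; case: ifP => _;
    rewrite ?saved_add_sig /= saved_foldl_add_sig Hz ?orbT.
have signed : has_key sn j (mysigs st2).
  rewrite /st2; case: ifP => Hm; rewrite ?mysigs_add_sig /= mysigs_foldl_add_sig //.
  by rewrite has_key_rcons /tr_sn /tr_src /= !eqxx orbT.
have count_saved :
    #|[set k | ((k, x) \in saved st) || ((k, x) \in sigs)]| <= nsaved st2 x.
  apply/subset_leq_card/subsetP => k; rewrite !inE => /orP[Hk|Hk]; first exact: old_saved.
  by apply: sigs_saved; rewrite mem_filter eqxx.
split.
- by move=> z Hz; case: ifP => _ /=; apply: sigs_saved.
- by case: ifP.
- move=> Hc; case: ifP => // /negP[].
  exact: leq_trans Hc (leq_mul (leqnn 2) count_saved).
- move=> Hm; exists (sigs_for st2 x); rewrite (negbTE Hm).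
  split; first by case: ifP.
    by rewrite mem_sigs_for /st2 (negbTE Hm) saved_add_sig !eqxx.
  by rewrite mem_sigs_for sigs_saved ?eqxx.
Qed.

(* Every bundle tagged (sn0, j0) sent by a correct process raises this
   counter, which never exceeds 2. *)
Definition key_progress sn0 (j0 : 'I_n) (st' : lstate M n) : nat :=
  has_key sn0 j0 (mysigs st') + has_key sn0 j0 (delivered st').

Lemma on_bundle_key_progress sn0 j0 :
  count (fun b => bundle_tag b == (sn0, j0)) res.1.2 + key_progress sn0 j0 st
    <= key_progress sn0 j0 res.1.1.
Proof.
rewrite /res; case: (boolP (accepts st m sn j sigs)) => H; last by rewrite on_bundle_reject.
have Hd : ~~ has_key sn j (delivered st) by case/andP: H.
rewrite (on_bundle_accept _ H) /key_progress /=.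
case: (boolP ((sn == sn0) && (j == j0))) => [/andP[/eqP E1 /eqP E2]|Hne].
  subst sn0 j0; rewrite (negbTE Hd).
  by case: ifP => Hm; case: ifP => Hk /=;
    rewrite ?mysigs_add_sig ?delivered_add_sig /= ?mysigs_foldl_add_sig
      ?delivered_foldl_add_sig ?has_key_rcons ?(negbTE Hd) /tr_sn /tr_src /=
      ?eqxx ?Hk ?andbT ?orbT.
have other_tag sgs : (bundle_tag (Bundle m sn j sgs) == (sn0, j0)) = false.
  by rewrite /= xpair_eqE; apply: negbTE.
by case: ifP => Hm; case: ifP => Ht' /=;
  rewrite ?mysigs_add_sig ?delivered_add_sig /= ?mysigs_foldl_add_sig
    ?delivered_foldl_add_sig ?has_key_rcons ?other_tag /tr_sn /tr_src /= ?(negbTE Hne) ?orbF.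
Qed.

End OnBundle.
End LocalStep.

Section Trace.
Variables (M : eqType) (n t : nat) (tr : nat -> event M n).
Local Notation lst := (lst t tr).
Local Notation outs := (outs t tr).
Local Notation dlv := (dlv t tr).

Lemma lstS p s : lst p s.+1 = (handle t p (lst p s) (tr s)).1.1.
Proof. by []. Qed.

Lemma saved_lstS p s y : y \in saved (lst p s.+1) ->
  [\/ y \in saved (lst p s),
      exists src m sn j sigs s' k,
          tr s = Recv p src (Bundle m sn j sigs) s' k /\ y \in sigs |
      y.1 = p /\ y.2 \in mysigs (lst p s.+1)].
Proof.
rewrite lstS /handle; case: (tr s) => [i' m sn|i' src [m sn j sigs] s' k|b dst msg|];
  try (by constructor 1); case: eqP => [<-|_] /=; try (by constructor 1).
- rewrite saved_add_sig /= => /orP[/eqP->|?]; last by constructor 1.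
  by constructor 3; rewrite mysigs_add_sig /= mem_rcons mem_head.
- case/on_bundle_saved => [?|?|[-> ?]]; [constructor 1|constructor 2|constructor 3] => //.
  by exists src, m, sn, j, sigs, s', k.
Qed.

Lemma mysigs_lstS p s : mysigs (lst p s.+1) = mysigs (lst p s) \/
  exists m sn j, mysigs (lst p s.+1) = rcons (mysigs (lst p s)) (m, sn, j) /\
   (tr s = Invoke p m sn /\ j = p \/
    exists src sigs s' k, [/\ tr s = Recv p src (Bundle m sn j sigs) s' k,
       accepts (lst p s) m sn j sigs & ~~ has_key sn j (mysigs (lst p s))]).
Proof.
rewrite lstS /handle; case: (tr s) => [i' m sn|i' src [m sn j sigs] s' k|b dst msg|];
  try (by left); case: eqP => [<-|_] /=; try (by left).
- by right; exists m, sn, i'; rewrite mysigs_add_sig; split; last left.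
- case: (on_bundle_mysigs t i' (lst i' s) m sn j sigs) => [->|[-> Ha Hk]]; first by left.
  by right; exists m, sn, j; split => //; right; exists src, sigs, s', k.
Qed.

Lemma delivered_lstS p s :
  delivered (lst p s.+1) =
    if dlv p s is Some y then rcons (delivered (lst p s)) y else delivered (lst p s).
Proof.
rewrite /dlv lstS /handle; case: (tr s) => [i' m sn|i' src [m sn j sigs] s' k|b dst msg|] //;
  case: eqP => [<-|_] //=; first by rewrite delivered_add_sig.
exact: on_bundle_delivered.
Qed.

Lemma dlv_inv p s y : dlv p s = Some y ->
  exists src m sn j sigs s' k, tr s = Recv p src (Bundle m sn j sigs) s' k /\
  [/\ y = (m, sn, j), accepts (lst p s) m sn j sigs,
     n + t < 2 * nsaved (lst p s.+1) y, (j, y) \in saved (lst p s.+1) &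
     exists k, onth (outs p s) k = Some (Bundle m sn j (sigs_for (lst p s.+1) y))].
Proof.
rewrite /dlv /outs lstS /handle.
case: (tr s) => [i' m sn|i' src [m sn j sigs] s' k|b dst msg|] //; case: eqP => [<-|_] //=.
move=> H; exists src, m, sn, j, sigs, s', k; split => //.
by case: (on_bundle_dlv H) => ->.
Qed.

Lemma outs_saved p s k b : onth (outs p s) k = Some b ->
  {subset bundle_sigs b <= saved (lst p s.+1)}.
Proof.
rewrite /outs lstS /handle; case: (tr s) => [i' m sn|i' src [m sn j sigs] s' k'|b' dst msg|];
  try (by case: k); case: eqP => [<-|_] /=; try (by case: k).
- case: k => [|k] /=; rewrite ?onth0n // => -[<-] z.
  by rewrite mem_sigs_for => /andP[].
- by case/on_bundle_outs.
Qed.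

Lemma recv_accept p s src m sn j sigs s' k :
  tr s = Recv p src (Bundle m sn j sigs) s' k -> accepts (lst p s) m sn j sigs ->
  [/\ {subset [seq z <- sigs | z.2 == (m, sn, j)] <= saved (lst p s.+1)},
     has_key sn j (mysigs (lst p s.+1)),
     n + t < 2 * #|[set k | ((k, (m, sn, j)) \in saved (lst p s)) ||
                            ((k, (m, sn, j)) \in sigs)]| ->
        dlv p s = Some (m, sn, j) &
     ~~ has_key sn j (mysigs (lst p s)) -> exists sgs : seq (signature M n),
        [/\ onth (outs p s) 0 = Some (Bundle m sn j sgs), (p, (m, sn, j)) \in sgs &
            (j, (m, sn, j)) \in sgs]].
Proof. by move=> E; rewrite /dlv /outs lstS /handle E eqxx; apply: on_bundle_accepted. Qed.

Lemma invoke_step p s m sn : tr s = Invoke p m sn ->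
  [/\ outs p s = [:: Bundle m sn p (sigs_for (lst p s.+1) (m, sn, p))],
      (p, (m, sn, p)) \in saved (lst p s.+1) &
      (m, sn, p) \in mysigs (lst p s.+1)].
Proof.
move=> E; rewrite /outs lstS /handle E eqxx /=.
by rewrite saved_add_sig eqxx mysigs_add_sig /= mem_rcons mem_head.
Qed.

Lemma saved_lst_mono p s s' : s <= s' -> {subset saved (lst p s) <= saved (lst p s')}.
Proof.
apply: (subset_chain (f := fun s => saved (lst p s))) => {}s y Hy.
rewrite lstS /handle; case: (tr s) => [i' m sn|i' src [m sn j sigs] s1 k|b dst msg|] //;
  case: eqP => [Hp|_] //=; subst i'; first by rewrite saved_add_sig Hy orbT.
exact: on_bundle_saved_mono.
Qed.

Lemma mysigs_lst_mono p s s' : s <= s' -> {subset mysigs (lst p s) <= mysigs (lst p s')}.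
Proof.
apply: (subset_chain (f := fun s => mysigs (lst p s))) => {}s y Hy.
by case: (mysigs_lstS p s) => [->|[m [sn [j [-> _]]]]]; rewrite // mem_rcons in_cons Hy orbT.
Qed.

Lemma delivered_lst_mono p s s' :
  s <= s' -> {subset delivered (lst p s) <= delivered (lst p s')}.
Proof.
apply: (subset_chain (f := fun s => delivered (lst p s))) => {}s y Hy.
by rewrite delivered_lstS; case: (dlv p s) => // z; rewrite mem_rcons in_cons Hy orbT.
Qed.

Lemma dlv_delivered p s y : dlv p s = Some y -> y \in delivered (lst p s.+1).
Proof. by rewrite delivered_lstS => ->; rewrite mem_rcons mem_head. Qed.

Lemma delivered_dlv p s y :
  y \in delivered (lst p s) -> exists2 s', s' < s & dlv p s' = Some y.
Proof.
elim: s => [|s IH] //=; rewrite delivered_lstS.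
case E: (dlv p s) => [z|] => [|/IH[s' ? ?]]; last by exists s' => //; apply: ltnW.
rewrite mem_rcons in_cons => /orP[/eqP ->|/IH[s' ? ?]]; first by exists s.
by exists s' => //; apply: ltnW.
Qed.

End Trace.

Arguments saved_lstS {M n t tr p s y}.
Arguments dlv_inv {M n t tr p s y}.
Arguments outs_saved {M n t tr p s k b}.
Arguments recv_accept {M n t tr p s src m sn j sigs s' k}.
Arguments invoke_step {M n t tr p s m sn}.
Arguments saved_lst_mono {M n t tr p s s'}.
Arguments mysigs_lst_mono {M n t tr p s s'}.
Arguments delivered_lst_mono {M n t tr p s s'}.
Arguments dlv_delivered {M n t tr p s y}.
Arguments delivered_dlv {M n t tr p s y}.

Section Protocol.
Variables (M : eqType) (n t d : nat) (C : {set 'I_n}) (tr : nat -> event M n).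
Hypothesis adm : admissible t tr d C.
Hypothesis few_byzantine : n - t <= #|C|.
Hypothesis resilience : 3 * t + 2 * d < n.
Local Notation lst := (lst t tr).
Local Notation outs := (outs t tr).
Local Notation dlv := (dlv t tr).
Local Notation mysigs_lstS := (mysigs_lstS t tr).

Let invoke_once : forall s1 s2 i m1 m2 sn,
  tr s1 = Invoke i m1 sn -> tr s2 = Invoke i m2 sn -> s1 = s2 :=
  proj1 (proj2 adm).
Let recv_origin : forall s i src b s' k, tr s = Recv i src b s' k ->
  [/\ i \in C, s' < s &
    (src \in C /\ onth (outs src s') k = Some b) \/
    [/\ src \notin C, k = 0 & tr s' = ByzSend src i b]] :=
  proj1 (proj2 (proj2 adm)).
Let unforgeable : forall s bz dst b, tr s = ByzSend bz dst b ->
  bz \notin C /\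
  forall k x, (k, x) \in bundle_sigs b -> k \in C -> x \in mysigs (lst k s) :=
  proj1 (proj2 (proj2 (proj2 (proj2 adm)))).
Let adversary : forall src s k b, src \in C -> onth (outs src s) k = Some b ->
  exists D : {set 'I_n}, #|D| <= d /\
    forall dst, dst \in C -> dst \notin D -> exists s2, tr s2 = Recv dst src b s k :=
  proj2 (proj2 (proj2 (proj2 (proj2 adm)))).

Lemma invoked_msg_eq s1 s2 i m1 m2 sn :
  tr s1 = Invoke i m1 sn -> tr s2 = Invoke i m2 sn -> m1 = m2.
Proof. by move=> E1 E2; move: (E1); rewrite (invoke_once E1 E2) E2 => -[]. Qed.

Lemma saved_sig_signed s p k y : p \in C -> k \in C ->
  (k, y) \in saved (lst p s) -> y \in mysigs (lst k s).
Proof.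
elim/ltn_ind: s p => -[|s] IH p // Hp Hk /saved_lstS[Hy|Hy|[/= -> //]].
- exact/(mysigs_lst_mono (leqnSn s))/(IH s _ p).
- have [src [m [sn [j [sigs [s' [k' [E Hy']]]]]]]] := Hy.
  have [_ Hs' [[Hsrc Ho]|[_ _ Eb]]] := recv_origin E.
    apply: (mysigs_lst_mono (leq_trans Hs' (leqnSn s))).
    exact: (IH s'.+1 Hs' src Hsrc Hk (outs_saved Ho _ Hy')).
  have [_ /(_ k y Hy' Hk)] := unforgeable Eb.
  exact/mysigs_lst_mono/leqW/ltnW.
Qed.

Lemma recv_sig_signed s p src b s' k' k y : tr s = Recv p src b s' k' -> k \in C ->
  (k, y) \in bundle_sigs b -> y \in mysigs (lst k s).
Proof.
move=> E Hk Hy; have [_ Hs' [[Hsrc Ho]|[_ _ Eb]]] := recv_origin E.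
  exact/(mysigs_lst_mono Hs')/(saved_sig_signed Hsrc Hk)/(outs_saved Ho).
have [_ /(_ k y Hy Hk)] := unforgeable Eb.
exact/mysigs_lst_mono/ltnW.
Qed.

(* A correct process signs its own triplets only when invoked: accepting a
   bundle requires the source's signature, which it would already have. *)
Lemma own_sig_invoked s k m sn : k \in C -> (m, sn, k) \in mysigs (lst k s) ->
  exists2 s0, s0 < s & tr s0 = Invoke k m sn.
Proof.
move=> Hk; elim: s => [|s IH] //.
have weaken : (exists2 s0, s0 < s & tr s0 = Invoke k m sn) ->
    exists2 s0, s0 < s.+1 & tr s0 = Invoke k m sn.
  by case=> s0 ? ?; exists s0 => //; apply: ltnW.
case: (mysigs_lstS k s) => [->|[m' [sn' [j [-> Hc]]]]]; first by move/IH/weaken.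
rewrite mem_rcons in_cons => /orP[/eqP[Em Esn Ej]|/IH/weaken //]; subst m' sn' j.
case: Hc => [[E _]|[src [sigs [s' [k' [E /andP[_ Hs] Hn]]]]]]; first by exists s.
by rewrite (mem_has_key (recv_sig_signed E Hk Hs)) in Hn.
Qed.

Lemma signed_invoked s k j m sn : k \in C -> j \in C ->
  (m, sn, j) \in mysigs (lst k s) -> exists s0, tr s0 = Invoke j m sn.
Proof.
move=> Hk Hj; elim: s => [|s IH] //.
case: (mysigs_lstS k s) => [->|[m' [sn' [j' [-> Hc]]]]]; first exact: IH.
rewrite mem_rcons in_cons => /orP[/eqP[Em Esn Ej]|]; last exact: IH.
subst m' sn' j'.
case: Hc => [[E ->]|[src [sigs [s' [k' [E /andP[_ Hs] _]]]]]]; first by exists s.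
by have [s0 _ ?] := own_sig_invoked Hj (recv_sig_signed E Hj Hs); exists s0.
Qed.

Lemma signed_once s k m1 m2 sn j : k \in C ->
  (m1, sn, j) \in mysigs (lst k s) -> (m2, sn, j) \in mysigs (lst k s) -> m1 = m2.
Proof.
move=> Hk; elim: s => [|s IH] //.
case: (mysigs_lstS k s) => [->|[m' [sn' [j' [-> Hc]]]]]; first exact: IH.
have not_old m0 m3 : (m0, sn, j) = (m', sn', j') ->
    (m3, sn, j) \notin mysigs (lst k s).
  case=> _ Esn Ej; subst sn' j'; apply/negP => Hm3.
  case: Hc => [[E Ej]|[src [sigs [s' [k' [_ _ Hn]]]]]].
    subst j; have [s0 Hs0 E0] := own_sig_invoked Hk Hm3.
    by rewrite (invoke_once E0 E) ltnn in Hs0.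
  by rewrite (mem_has_key Hm3) in Hn.
rewrite !mem_rcons !in_cons => /orP[/eqP E1|H1] /orP[/eqP E2|H2].
- by move: E1 E2 => [-> _ _] [-> _ _].
- by rewrite (negbTE (not_old _ _ E1)) in H2.
- by rewrite (negbTE (not_old _ _ E2)) in H1.
- exact: IH.
Qed.

Lemma dlv_correct_invoked p s m sn j : j \in C -> dlv p s = Some (m, sn, j) ->
  exists2 s0, s0 < s & tr s0 = Invoke j m sn.
Proof.
move=> Hj /dlv_inv [src [m' [sn' [j' [sigs [s' [k [E [[Em Esn Ej] /andP[_ Hs] _ _ _]]]]]]]]].
subst m' sn' j'.
exact: (own_sig_invoked Hj (recv_sig_signed E Hj Hs)).
Qed.

Lemma dlv_once p s1 s2 m1 m2 sn j :
  dlv p s1 = Some (m1, sn, j) -> dlv p s2 = Some (m2, sn, j) -> s1 = s2.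
Proof.
wlog Hle : s1 s2 m1 m2 / s1 <= s2.
  move=> W H1 H2; case: (leqP s1 s2) => H; first exact: W H1 H2.
  by symmetry; apply: W H2 H1; apply: ltnW.
move: Hle; rewrite leq_eqVlt => /orP[/eqP //|Hlt] H1 H2.
have Hd := delivered_lst_mono Hlt _ (dlv_delivered H1).
have [_ [_ [_ [_ [_ [_ [_ [_ [[_ <- <-] /andP[Hnd _] _ _ _]]]]]]]]] := dlv_inv H2.
by rewrite (mem_has_key Hd) in Hnd.
Qed.

Lemma dlv_agree p q s1 s2 m1 m2 sn j : p \in C -> q \in C ->
  dlv p s1 = Some (m1, sn, j) -> dlv q s2 = Some (m2, sn, j) -> m1 = m2.
Proof.
move=> Hp Hq H1 H2.
have [_ [_ [_ [_ [_ [_ [_ [_ [_ _ Q1 _ _]]]]]]]]] := dlv_inv H1.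
have [_ [_ [_ [_ [_ [_ [_ [_ [_ _ Q2 _ _]]]]]]]]] := dlv_inv H2.
have := quorums_meet (C := C) (t := t); rewrite card_ord => /(_ _ _ few_byzantine Q1 Q2).
case=> k Hk /andP[].
rewrite !inE => /(saved_sig_signed Hp Hk) K1 /(saved_sig_signed Hq Hk) K2.
apply: (signed_once Hk (mysigs_lst_mono (leq_maxl s1.+1 s2.+1) _ K1)).
exact: (mysigs_lst_mono (leq_maxr s1.+1 s2.+1) _ K2).
Qed.

Lemma delivered_key_dlv i s0 m sn r s : i \in C -> tr s0 = Invoke i m sn ->
  has_key sn i (delivered (lst r s)) -> exists2 s', s' < s & dlv r s' = Some (m, sn, i).
Proof.
move=> Hi E0 /has_key_witness [m' /delivered_dlv [s' Hs' Hd]]; exists s' => //.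
have [s1 _ E1] := dlv_correct_invoked Hi Hd.
by rewrite (invoked_msg_eq E0 E1).
Qed.

Definition sent_cosigned k m sn j s' :=
  exists k' (sgs : seq (signature M n)),
    [/\ onth (outs k s') k' = Some (Bundle m sn j sgs),
        (k, (m, sn, j)) \in sgs & (j, (m, sn, j)) \in sgs].

Lemma signed_bundle_sent k s m sn j : k \in C -> (m, sn, j) \in mysigs (lst k s) ->
  exists2 s', s' < s & sent_cosigned k m sn j s'.
Proof.
move=> Hk; elim: s => [|s IH] //.
have weaken : (exists2 s', s' < s & sent_cosigned k m sn j s') ->
    exists2 s', s' < s.+1 & sent_cosigned k m sn j s'.
  by case=> s' ? ?; exists s' => //; apply: ltnW.
case: (mysigs_lstS k s) => [->|[m' [sn' [j' [-> Hc]]]]]; first by move/IH/weaken.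
rewrite mem_rcons in_cons => /orP[/eqP[Em Esn Ej]|/IH/weaken //]; subst m' sn' j'.
case: Hc => [[E Ej]|[src [sigs [s' [k' [E Ha Hn]]]]]].
  subst j; have [Eo Hs _] := invoke_step (t := t) E.
  exists s => //; exists 0, (sigs_for (lst k s.+1) (m, sn, k)).
  by rewrite Eo mem_sigs_for Hs eqxx.
have [_ _ _ /(_ Hn) [sgs [? ? ?]]] := recv_accept E Ha.
by exists s => //; exists 0, sgs.
Qed.

(* Either the bundle is accepted now, or it is rejected because (sn, j) was
   already delivered, and the triplet was signed when that earlier bundle
   was accepted. *)
Lemma recv_signs r s src m sn j sigs s' k : j \in C ->
  tr s = Recv r src (Bundle m sn j sigs) s' k -> (j, (m, sn, j)) \in sigs ->
  (m, sn, j) \in mysigs (lst r s.+1).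
Proof.
move=> Hj E Hs; have [Hr _ _] := recv_origin E.
have [s1 _ E1] := own_sig_invoked Hj (recv_sig_signed E Hj Hs).
have signs_accepted s2 src2 sigs2 s2' k2 :
    tr s2 = Recv r src2 (Bundle m sn j sigs2) s2' k2 ->
    accepts (lst r s2) m sn j sigs2 -> (m, sn, j) \in mysigs (lst r s2.+1).
  move=> E2 Ha; have [_ /has_key_witness [m' Hm'] _ _] := recv_accept E2 Ha.
  have [s3 E3] := signed_invoked Hr Hj Hm'.
  by rewrite (invoked_msg_eq E1 E3).
case: (boolP (accepts (lst r s) m sn j sigs)) => Ha; first exact: signs_accepted E Ha.
have Hk : has_key sn j (delivered (lst r s)) by move: Ha; rewrite /accepts Hs andbT negbK.
have [s2 Hs2 Hd] := delivered_key_dlv Hj E1 Hk.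
have [src2 [m2 [sn2 [j2 [sigs2 [s2' [k2 [E2 [[Em Esn Ej] Ha2 _ _ _]]]]]]]]] := dlv_inv Hd.
subst m2 sn2 j2.
exact: (mysigs_lst_mono (leq_trans Hs2 (leqnSn s))) (signs_accepted _ _ _ _ _ E2 Ha2).
Qed.

Definition recv_cosigned (P : nat -> Prop) r m sn i k s2 :=
  exists src (sigs : seq (signature M n)) s' k',
    [/\ P s2, tr s2 = Recv r src (Bundle m sn i sigs) s' k',
        (k, (m, sn, i)) \in sigs & (i, (m, sn, i)) \in sigs].

(* At the latest of these receptions all earlier cosignatures are already
   saved, so [r] holds a quorum unless it has delivered already. *)
Lemma quorum_recv_dlv r (P : nat -> Prop) i m sn s0 (K : {set 'I_n}) :
  (forall a b, a <= b -> P b -> P a) -> i \in C -> tr s0 = Invoke i m sn ->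
  n + t < 2 * #|K| -> (forall k, k \in K -> exists s2, recv_cosigned P r m sn i k s2) ->
  exists s, P s /\ dlv r s = Some (m, sn, i).
Proof.
move=> Pdown Hi E0 HK HR.
have /fin_all_exists [f Hf] : forall k, exists s2, k \in K -> recv_cosigned P r m sn i k s2.
  move=> k; case: (boolP (k \in K)) => Hk; last by exists 0.
  by have [s2 ?] := HR k Hk; exists s2.
have [k0 Hk0] : exists k0, k0 \in K by apply/card_gt0P; lia.
have [kl Hkl last_recv] := arg_maxnP f Hk0.
have [src [sigs [s' [k' [Pl El _ Hil]]]]] := Hf kl Hkl.
case: (boolP (has_key sn i (delivered (lst r (f kl))))) => Hd.
  have [s3 Hs3 D3] := delivered_key_dlv Hi E0 Hd.
  by exists s3; split => //; exact: Pdown (ltnW Hs3) Pl.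
have Ha : accepts (lst r (f kl)) m sn i sigs by rewrite /accepts Hd Hil.
have [_ _ Hquorum _] := recv_accept El Ha; exists (f kl); split => //; apply: Hquorum.
apply: (leq_trans HK); rewrite leq_mul2l /=; apply/subset_leq_card/subsetP => k Hk.
have [src' [sigs' [s'' [k'' [_ Ek Hks Hik]]]]] := Hf k Hk.
rewrite inE; have /= := last_recv k Hk; rewrite leq_eqVlt => /orP[/eqP Eq|Hlt].
  by rewrite Eq El in Ek; case: Ek => _ -> _ _; rewrite Hks orbT.
have Hd' : ~~ has_key sn i (delivered (lst r (f k))).
  exact: contra (has_key_subset (delivered_lst_mono (ltnW Hlt))) Hd.
have [saved_now _ _ _] := recv_accept Ek (introT andP (conj Hd' Hik)).
by rewrite (saved_lst_mono Hlt) // saved_now // mem_filter eqxx.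
Qed.

Lemma dlv_relay p s m sn j : p \in C -> dlv p s = Some (m, sn, j) ->
  exists D : {set 'I_n}, #|D| <= d /\ forall r, r \in C -> r \notin D ->
    exists s2 b k s3, [/\ tr s2 = Recv r p b s k, s3 <= s2 & dlv r s3 = Some (m, sn, j)].
Proof.
move=> Hp Hd.
have [_ [m' [sn' [j' [_ [_ [_ [_ [[Em Esn Ej] _ Hquorum Hjx [k Ho]]]]]]]]]] := dlv_inv Hd.
subst m' sn' j'.
have [D [HD HR]] := adversary Hp Ho; exists D; split => // r Hr HrD.
have [s2 E2] := HR r Hr HrD; exists s2, (Bundle m sn j (sigs_for (lst p s.+1) (m, sn, j))), k.
case: (boolP (has_key sn j (delivered (lst r s2)))) => Hk.
  have [m' /delivered_dlv [s3 Hs3 D3]] := has_key_witness Hk.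
  have Em := dlv_agree Hp Hr Hd D3; subst m'.
  by exists s3; split => //; apply: ltnW.
have Ha : accepts (lst r s2) m sn j (sigs_for (lst p s.+1) (m, sn, j)).
  by rewrite /accepts Hk mem_sigs_for eqxx andbT.
have [_ _ Hdlv _] := recv_accept E2 Ha; exists s2; split => //; apply: Hdlv.
apply: (leq_trans Hquorum); rewrite leq_mul2l /=; apply/subset_leq_card/subsetP => k'.
by rewrite !inE mem_sigs_for eqxx andbT => ->; rewrite orbT.
Qed.

Lemma key_progress_lstS p s sn0 i0 : p \in C ->
  count (fun b => bundle_tag b == (sn0, i0)) (outs p s) + key_progress sn0 i0 (lst p s)
    <= key_progress sn0 i0 (lst p s.+1).
Proof.
move=> Hp; rewrite /outs lstS /handle.
case E: (tr s) => [i' m sn|i' src [m sn j sigs] s' k|b dst msg|] //=;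
  case: eqP => [Hi|_] //=; subst i'; last exact: on_bundle_key_progress.
rewrite /key_progress mysigs_add_sig /= delivered_add_sig /= has_key_rcons /tr_sn /tr_src /=.
rewrite addn0 xpair_eqE.
case: (boolP ((sn == sn0) && (p == i0))) => [/andP[/eqP E1 /eqP E2]|Hne]; last first.
  by rewrite orbF add0n.
subst sn0 i0; rewrite orbT.
case: (boolP (has_key sn p (mysigs (lst p s)))) => Hk.
  have [m' /(own_sig_invoked Hp) [s1 Hs1 E1]] := has_key_witness Hk.
  by rewrite (invoke_once E1 E) ltnn in Hs1.
by case: (has_key sn p (delivered _)).
Qed.

Lemma sent_tag_le2 p N sn0 i0 : p \in C ->
  \sum_(s < N) count (fun b => bundle_tag b == (sn0, i0)) (outs p s) <= 2.
Proof.
move=> Hp.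
have progress N' : \sum_(s < N') count (fun b => bundle_tag b == (sn0, i0)) (outs p s)
    + key_progress sn0 i0 (lst p 0) <= key_progress sn0 i0 (lst p N').
  elim: N' => [|N' IH]; first by rewrite big_ord0.
  rewrite big_ord_recr /= -addnA (addnC (count _ _)) addnA.
  by apply: leq_trans (key_progress_lstS N' sn0 i0 Hp); rewrite addnC leq_add2l.
apply: leq_trans (leq_trans (leq_addr _ _) (progress N)) _.
by rewrite /key_progress; case: has_key; case: has_key.
Qed.

Lemma msgs_sent_le sn i N : msgs_sent t tr C sn i N <= 2 * n ^ 2.
Proof.
apply: (@leq_trans (\sum_(p in C) (n * 2))).
  apply: leq_sum => p Hp; rewrite -big_distrr /= leq_mul2l.
  by rewrite sent_tag_le2 ?orbT.
rewrite sum_nat_const; apply: (@leq_trans (n * (n * 2))).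
  by have := max_card C; rewrite card_ord leq_mul2r => ->; rewrite orbT.
by rewrite mulnA mulnC mulnn.
Qed.

(* By double counting, some process of [W] receives cosigned bundles from
   more than (n+t)/2 members of [Q]. *)
Lemma flood_dlv (P : nat -> Prop) i m sn s0 (Q W : {set 'I_n}) :
  (forall a b, a <= b -> P b -> P a) -> i \in C -> tr s0 = Invoke i m sn ->
  (forall k, k \in Q -> exists D : {set 'I_n}, #|D| <= d /\
     forall r, r \in C -> r \notin D -> r \in W /\ exists s2, recv_cosigned P r m sn i k s2) ->
  #|W| * ((n + t) %/ 2) < #|Q| * (#|C| - d) ->
  exists r s, [/\ r \in W, P s & dlv r s = Some (m, sn, i)].
Proof.
move=> Pdown Hi E0 Hflood Hcount.
have /fin_all_exists [D HD] : forall k, exists D : {set 'I_n}, k \in Q -> #|D| <= d /\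
    forall r, r \in C -> r \notin D -> r \in W /\ exists s2, recv_cosigned P r m sn i k s2.
  move=> k; case: (boolP (k \in Q)) => Hk; last by exists set0.
  by have [Dk ?] := Hflood k Hk; exists Dk.
have [r HrW Hmany] : exists2 r, r \in W & (n + t) %/ 2 < #|[set k in Q | r \in C :\: D k]|.
  apply: double_count_pigeonhole Hcount => k /HD [HDk Hreach]; split.
    by apply/subsetP => r; rewrite inE => /andP[HrD Hr]; have [] := Hreach r Hr HrD.
  exact: leq_trans (leq_sub2l _ HDk) (leq_cardsD _ _).
case: (@quorum_recv_dlv r P i m sn s0 [set k in Q | r \in C :\: D k]) => //.
- lia.
- move=> k; rewrite !inE => /andP[Hk /andP[HrD Hr]].
  exact: ((HD k Hk).2 r Hr HrD).2.
- by move=> s [Ps Hs]; exists r, s.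
Qed.

Lemma local_delivery i s0 m sn : i \in C -> tr s0 = Invoke i m sn ->
  exists p s, p \in C /\ dlv p s = Some (m, sn, i).
Proof.
move=> Hi E0.
have [S inS] := finset_of_prop (fun k => k \in C /\ exists s, (m, sn, i) \in mysigs (lst k s)).
have iS : i \in S.
  by apply/inS; split => //; exists s0.+1; have [] := invoke_step (t := t) E0.
case: (@flood_dlv (fun=> True) i m sn s0 S S) => //.
- move=> k /inS [Hk [s Hs]].
  have [s' _ [k' [sgs [Ho Hks His]]]] := signed_bundle_sent Hk Hs.
  have [D [HD Hreach]] := adversary Hk Ho; exists D; split => // r Hr HrD.
  have [s2 E2] := Hreach r Hr HrD; split.
    by apply/inS; split => //; exists s2.+1; exact: recv_signs Hi E2 His.
  by exists s2, k, sgs, s', k'.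
- have : 0 < #|S| by apply/card_gt0P; exists i.
  by rewrite ltn_mul2l => ->; have := few_byzantine; lia.
- by move=> r [s [/inS[Hr _] _ Hd]]; exists r, s.
Qed.

Lemma global_delivery : mbrb_global_delivery t tr C (#|C| - d).
Proof.
move=> p s m sn j Hp Hd; have [D [HD Hrelay]] := dlv_relay Hp Hd.
exists (C :\: D); split.
- exact: subsetDl.
- exact: leq_trans (leq_sub2l _ HD) (leq_cardsD _ _).
- move=> r; rewrite inE => /andP[HrD Hr].
  by have [_ [_ [_ [s3 [_ _ D3]]]]] := Hrelay r Hr HrD; exists s3.
Qed.

Lemma mbrb_properties :
  [/\ mbrb_validity t tr C, mbrb_no_duplication t tr C, mbrb_no_duplicity t tr C,
      mbrb_local_delivery t tr C & mbrb_global_delivery t tr C (#|C| - d)].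
Proof.
split.
- by move=> p s m sn j _ Hj /(dlv_correct_invoked Hj) [s0 _ E]; exists s0.
- by move=> p s1 s2 m1 m2 sn j _; apply: dlv_once.
- by move=> p q s1 s2 m1 m2 sn j; apply: dlv_agree.
- by move=> i s0 m sn; apply: local_delivery.
- exact: global_delivery.
Qed.

Section Timing.
Variables (R : realFieldType) (tau : nat -> R).
Hypothesis delay : unit_delay tr tau.

Let before (s0 : nat) (delta : R) := fun s => (tau s <= tau s0 + delta)%R.

Lemma before_down s0 delta a b : a <= b -> before s0 delta b -> before s0 delta a.
Proof. by move=> /(proj1 delay) Hab; apply: le_trans. Qed.

Lemma two_step_flood i m sn s0 : i \in C -> tr s0 = Invoke i m sn ->
  exists2 D0 : {set 'I_n}, #|D0| <= d & forall k, k \in (C :\: D0) :|: [set i] ->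
    exists D : {set 'I_n}, #|D| <= d /\ forall r, r \in C -> r \notin D ->
      r \in C /\ exists s2, recv_cosigned (before s0 2) r m sn i k s2.
Proof.
have [Hmono Hdelay] := delay; move=> Hi E0.
pose x := (m, sn, i).
have [Eo Hsv _] := invoke_step (t := t) E0.
have Ho0 : onth (outs i s0) 0 = Some (Bundle m sn i (sigs_for (lst i s0.+1) x)) by rewrite Eo.
have Hix : (i, x) \in sigs_for (lst i s0.+1) x by rewrite mem_sigs_for Hsv eqxx.
have [D0 [HD0 Hreach0]] := adversary Hi Ho0; exists D0 => // k Hk.
have [Hk' [s' [k' [sgs [Ht Ho Hks His]]]]] : k \in C /\ exists s' k' sgs,
    [/\ (tau s' <= tau s0 + 1)%R, onth (outs k s') k' = Some (Bundle m sn i sgs),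
        (k, x) \in sgs & (i, x) \in sgs].
  case/setUP: Hk => [|/set1P ->]; last first.
    by split => //; exists s0, 0, (sigs_for (lst i s0.+1) x); split => //; lra.
  rewrite inE => /andP[HkD HkC]; split => //.
  have [s2 E2] := Hreach0 k HkC HkD.
  have [s' Hs' [k' [sgs [Ho Hks His]]]] := signed_bundle_sent HkC (recv_signs Hi E2 Hix).
  by exists s', k', sgs; split => //; rewrite -(Hdelay _ _ _ _ _ _ E2); apply: Hmono.
have [D [HD Hreach]] := adversary Hk' Ho; exists D; split => // r Hr HrD.
have [s3 E3] := Hreach r Hr HrD; split => //; exists s3, k, sgs, s', k'; split => //.
by rewrite /before (Hdelay _ _ _ _ _ _ E3); lra.
Qed.

Lemma delivered_within_two i m sn s0 : d = 0 -> i \in C -> tr s0 = Invoke i m sn ->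
  delivered_within t tr C tau (#|C| - d) i m sn s0 2.
Proof.
move=> d0 Hi E0; have [D0 HD0 Hflood] := two_step_flood Hi E0.
have no_loss (D : {set 'I_n}) r : #|D| <= d -> r \notin D.
  by rewrite d0 leqn0 cards_eq0 => /eqP ->; rewrite inE.
exists C; split => //; first exact: leq_subr.
move=> r Hr; case: (@quorum_recv_dlv r (before s0 2) i m sn s0 C) => //.
- exact: before_down.
- by have := few_byzantine; lia.
- move=> k Hk; have [|D [HD Hreach]] := Hflood k; first by rewrite !inE Hk no_loss.
  exact: (Hreach r Hr (no_loss _ _ HD)).2.
- by move=> s [Ps Ds]; exists s.
Qed.

Lemma delivered_within_three i m sn s0 : i \in C -> tr s0 = Invoke i m sn ->
  #|C| * ((n + t) %/ 2) < (#|C| - d) * (#|C| - d) ->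
  delivered_within t tr C tau (#|C| - d) i m sn s0 3.
Proof.
have [Hmono Hdelay] := delay; move=> Hi E0 Hsq.
have [D0 HD0 Hflood] := two_step_flood Hi E0.
case: (@flood_dlv (before s0 2) i m sn s0 ((C :\: D0) :|: [set i]) C) => //.
- exact: before_down.
- apply: (leq_trans Hsq); rewrite leq_mul2r; apply/orP; right.
  apply: leq_trans (leq_trans (leq_sub2l _ HD0) (leq_cardsD C D0)) _.
  exact/subset_leq_card/subsetUl.
move=> p [s [Hp Hs Hd]].
have [D [HD Hrelay]] := dlv_relay Hp Hd; exists (C :\: D); split.
- exact: subsetDl.
- exact: leq_trans (leq_sub2l _ HD) (leq_cardsD _ _).
- move=> q; rewrite inE => /andP[HqD Hq].
  have [s2 [b [k [s3 [E2 Hs3 D3]]]]] := Hrelay q Hq HqD; exists s3; split => //.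
  by have := Hmono _ _ Hs3; rewrite (Hdelay _ _ _ _ _ _ E2); move: Hs; rewrite /before; lra.
Qed.

End Timing.
End Protocol.

Local Open Scope ring_scope.

Theorem theorem1 (R : rcfType) (M : eqType) (n t d : nat) (C : {set 'I_n})
    (tr : nat -> event M n) :
  (n - t <= #|C|)%N -> (d < #|C|)%N ->
  (3 * t + 2 * d < n)%N ->
  admissible t tr d C ->
  let c := #|C| in
  let q := ((n + t) %/ 2)%N in
  [/\ [/\ mbrb_validity t tr C,
          mbrb_no_duplication t tr C,
          mbrb_no_duplicity t tr C,
          mbrb_local_delivery t tr C &
          mbrb_global_delivery t tr C (c - d)],
      (forall (tau : nat -> R) i m sn s0, unit_delay tr (R:=R) tau ->
         i \in C -> tr s0 = Invoke i m sn ->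
         ((d%:R : R) < (c%:R - q%:R) / (q%:R + 1) ->
            delivered_within t tr C (R:=R) tau (c - d) i m sn s0 (2 : R)) /\
         ((d%:R : R) < c%:R - Num.sqrt (c%:R * ((n + t)%:R / 2)) ->
            delivered_within t tr C (R:=R) tau (c - d) i m sn s0 (3 : R)))
    & forall i m sn s0 N, i \in C -> tr s0 = Invoke i m sn ->
         (msgs_sent t tr C sn i N <= 2 * n ^ 2)%N].
Proof.
move=> few_byzantine Hdc resilience adm c q; split.
- exact: mbrb_properties adm few_byzantine resilience.
- move=> tau i m sn s0 delay Hi E0; split => Hbound.
    (* as c <= n <= 2q + 1, the two-step bound can only hold for d = 0 *)
    apply: (delivered_within_two adm few_byzantine resilience delay) => //.
    apply: two_step_bound_eq0 Hbound.
    by have := max_card C; rewrite card_ord /c /q; lia.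
  apply: (delivered_within_three adm few_byzantine resilience delay) => //.
  exact: three_step_bound_nat (ltnW Hdc) Hbound.
- by move=> i m sn s0 N _ _; exact: (msgs_sent_le adm sn i N).
Qed.
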